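(* If $A$ is a finite abelian group, then $\check H^1_{ct}(\mathbb Z_{\ge0};A)=0$, where $\mathbb Z_{\ge0}$ carries the metric $d(x,y)=|x-y|$.
   Context: For a metric space $X$: a coarse cover of $U\subseteq X$ is a finite family $U_1,\dots,U_n\subseteq U$ such that for every $R\ge 0$ the set $\bigcap_i\{x\in U: d(x,U\setminus U_i)\le R\}$ is bounded. $X_{ct}$ is the Grothendieck topology on the poset of subsets of $X$ with coarse covers as coverings; a sheaf on $X_{ct}$ is a contravariant functor to abelian groups satisfying the equalizer (sheaf) condition for coarse covers. $\check H^q_{ct}(X;A)$ is the $q$th right derived functor of global sections evaluated at the constant sheaf $A_X$ (sheafification of the constant presheaf $A$). *)

From HB Require Import structures.
From mathcomp Require Import all_boot all_algebra.
Set Implicit Arguments. Unset Strict Implicit. Unset Printing Implicit Defensive.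
Import GRing.Theory.
Local Open Scope ring_scope.

(* Subsets of X = Z_{>=0}, modelled by nat. *)
Definition subset_of := nat -> Prop.
Definition incl (V U : subset_of) : Prop := forall x, V x -> U x.
Definition setX : subset_of := fun _ => True.
Definition inter (V W : subset_of) : subset_of := fun x => V x /\ W x.
Lemma incl_interl V W : incl (inter V W) V. Proof. by move=> x []. Qed.
Lemma incl_interr V W : incl (inter V W) W. Proof. by move=> x []. Qed.

Definition dist (x y : nat) : nat := ((x - y) + (y - x))%N.

Definition bounded (S : subset_of) : Prop := exists M : nat, forall x, S x -> (x <= M)%N.

(* d(x, S) <= R ; for S empty, d(x,S) = +oo and this fails.  Distances
   are integers so the infimum is attained. *)
Definition dist_le (x : nat) (S : subset_of) (R : nat) : Prop :=
  exists y, S y /\ (dist x y <= R)%N.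

Definition coarse_cover (U : subset_of) (n : nat) (V : 'I_n -> subset_of) : Prop :=
  (forall i, incl (V i) U) /\
  forall R : nat,
    bounded (fun x => U x /\ forall i, dist_le x (fun y => U y /\ ~ V i y) R).

Record presheaf := Presheaf {
  sec : subset_of -> zmodType;
  res : forall U V, incl V U -> sec U -> sec V;
  res_sub : forall U V (h : incl V U) (x y : sec U),
      res h (x - y) = res h x - res h y;
  res_id : forall U (h : incl U U) (x : sec U), res h x = x;
  res_comp : forall U V W (hVU : incl V U) (hWV : incl W V) (hWU : incl W U)
      (x : sec U), res hWV (res hVU x) = res hWU x }.

Definition is_sheaf (F : presheaf) : Prop :=
  forall (U : subset_of) (n : nat) (V : 'I_n -> subset_of)
         (hV : forall i, incl (V i) U),
    coarse_cover U V ->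
    (forall s t : sec F U, (forall i, res (hV i) s = res (hV i) t) -> s = t) /\
    (forall t : forall i, sec F (V i),
       (forall i j, res (@incl_interl (V i) (V j)) (t i)
                  = res (@incl_interr (V i) (V j)) (t j)) ->
       exists s : sec F U, forall i, res (hV i) s = t i).

Record sheaf := Sheaf { sh_psh :> presheaf; sh_sheaf : is_sheaf sh_psh }.

Record pmorph (F G : presheaf) := PMorph {
  mapp : forall U, sec F U -> sec G U;
  mapp_sub : forall U (x y : sec F U), mapp (x - y) = mapp x - mapp y;
  mapp_nat : forall U V (h : incl V U) (x : sec F U),
      mapp (res h x) = res h (mapp x) }.
Arguments mapp {F G} p {U} x.

Definition mono (F G : presheaf) (f : pmorph F G) : Prop :=
  forall U, injective (@mapp F G f U).

Definition sheaf_epi (F G : sheaf) (f : pmorph F G) : Prop :=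
  forall (H : sheaf) (a b : pmorph G H),
    (forall U (x : sec F U), mapp a (mapp f x) = mapp b (mapp f x)) ->
    forall U (y : sec G U), mapp a y = mapp b y.

Definition sheaf_injective (I : sheaf) : Prop :=
  forall (F G : sheaf) (f : pmorph F G) (g : pmorph F I),
    mono f -> exists h : pmorph G I,
      forall U (x : sec F U), mapp h (mapp f x) = mapp g x.

Definition cst_presheaf (A : zmodType) : presheaf :=
  @Presheaf (fun _ => A) (fun U V _ x => x)
    (fun _ _ _ _ _ => erefl) (fun _ _ _ => erefl)
    (fun _ _ _ _ _ _ _ => erefl).

Definition is_sheafification (P : presheaf) (S : sheaf) (eta : pmorph P S) : Prop :=
  forall (G : sheaf) (phi : pmorph P G),
    exists psi : pmorph S G,
      (forall U (x : sec P U), mapp psi (mapp eta x) = mapp phi x) /\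
      forall psi' : pmorph S G,
        (forall U (x : sec P U), mapp psi' (mapp eta x) = mapp phi x) ->
        forall U (y : sec S U), mapp psi' y = mapp psi y.

(* H^1_ct(X; F) = R^1 Gamma(F) = 0, computed via an injective resolution
   0 -> F -> I^0 -> I^1 -> ...: with Q = coker(F -> I^0) (the image of I^0 in
   I^1), R^1 Gamma(F) = coker(Gamma(I^0) -> Gamma(Q)).  We require this for
   every short exact sequence 0 -> F -> I -> Q -> 0 of sheaves with I injective
   (the value is independent of the choice). *)
Definition H1ct_vanishes (F : sheaf) : Prop :=
  forall (I Q : sheaf) (i : pmorph F I) (p : pmorph I Q),
    sheaf_injective I ->
    mono i ->
    (forall U (t : sec I U), mapp p t = 0 <-> exists s : sec F U, mapp i s = t) ->
    sheaf_epi p ->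
    forall q : sec Q setX, exists t : sec I setX, mapp p t = q.

(* A global section q of Q has to be lifted along p : I -> Q.  As an
   epimorphism of sheaves p is locally surjective, so q lifts on a finite coarse
   cover (V_j) of Z_{>=0} to sections t_j of I, and the differences t_j - t_j'
   come from A_X, hence are locally constants of A.  Cut Z_{>=0} into consecutive
   blocks K_k, each meeting the next in an overlap O_k, whose lengths grow so
   slowly that K_k lies in some V_(j_k) and t_(j_k) - t_(j_(k+1)) is a constant
   a_k on O_k.  Subtracting a_0 + ... + a_(k-1) from t_(j_k) on K_k makes
   consecutive sections agree on the overlaps.  As A is finite, only finitely
   many corrected sections occur; the blocks carrying the same one form finitely
   many pieces covering Z_{>=0} coarsely, and the corrected sections glue to a
   global section of I mapping to q. *)

From Pilot Require Import Defs.
From HB Require Import structures.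
From mathcomp Require Import all_boot all_algebra.
From mathcomp Require Import zify.
From mathcomp Require Import boolp.
From Stdlib Require List.
Set Implicit Arguments. Unset Strict Implicit. Unset Printing Implicit Defensive.
Import GRing.Theory.
Local Open Scope ring_scope.

Section PresheafAlgebra.
Variable F : presheaf.
Implicit Types U V W : subset_of.

Lemma res_irr U V (h1 h2 : incl V U) (x : sec F U) : res h1 x = res h2 x.
Proof. by rewrite -(res_comp h1 (fun _ hx => hx) h2 x) res_id. Qed.

Lemma resK U V W (h1 : incl V U) (h2 : incl W V) (x : sec F U) :
  res h2 (res h1 x) = res (fun z hz => h1 z (h2 z hz)) x.
Proof. exact: res_comp. Qed.

Lemma res0 U V (h : incl V U) : res h (0 : sec F U) = 0.
Proof. by have := @res_sub F _ _ h 0 0; rewrite !subrr. Qed.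

Lemma resN U V (h : incl V U) (x : sec F U) : res h (- x) = - res h x.
Proof. by have := @res_sub F _ _ h 0 x; rewrite !sub0r res0 sub0r. Qed.

Lemma resD U V (h : incl V U) (x y : sec F U) : res h (x + y) = res h x + res h y.
Proof. by have := @res_sub F _ _ h x (- y); rewrite opprK resN opprK. Qed.
End PresheafAlgebra.

Lemma mapp0 (F G : presheaf) (f : pmorph F G) U : mapp f (0 : sec F U) = 0.
Proof. by have := mapp_sub f (0 : sec F U) 0; rewrite !subrr. Qed.

Definition pmorph_comp (F G H : presheaf) (f : pmorph F G) (g : pmorph G H) :
  pmorph F H.
Proof.
refine (@PMorph F H (fun U x => mapp g (mapp f x)) _ _).
  by move=> U x y; rewrite !mapp_sub.
by move=> U V h x; rewrite !mapp_nat.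
Defined.

Definition pmorph0 (F G : presheaf) : pmorph F G :=
  @PMorph F G (fun _ _ => 0) (fun _ _ _ => esym (subr0 0))
    (fun _ _ h _ => esym (@res0 G _ _ h)).

(* Subsets are predicates without decidable equality, so lists of subsets are
   searched with [List.In] rather than [\in]. *)
Lemma In_map (T T' : Type) (f : T -> T') s a : List.In a s -> List.In (f a) (map f s).
Proof. by elim: s => [|b s IH] //= [->|/IH]; [left|right]. Qed.

Lemma In_mapP (T T' : Type) (f : T -> T') s b :
  List.In b (map f s) -> exists2 a, f a = b & List.In a s.
Proof.
elim: s => [|a s IH] //= [<-|/IH [c <- h]]; first by exists a => //; left.
by exists c => //; right.
Qed.

Lemma In_cat (T : Type) (s t : seq T) a : List.In a (s ++ t) <-> List.In a s \/ List.In a t.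
Proof.
elim: s => [|b s IH] /=; first by split=> [|[]] //; right.
by rewrite IH; tauto.
Qed.

Lemma In_flatten (T : Type) (ss : seq (seq T)) a :
  List.In a (flatten ss) <-> exists2 s, List.In s ss & List.In a s.
Proof.
elim: ss => [|s ss IH] /=; first by split=> [|[]].
rewrite In_cat IH; split.
  by case=> [|[t]]; [exists s => //; left|exists t => //; right].
by case=> u [<-|hu] ha; [left|right; exists u].
Qed.

Lemma In_allpairs (T T' T'' : Type) (f : T -> T' -> T'') s t a b :
  List.In a s -> List.In b t -> List.In (f a b) [seq f x y | x <- s, y <- t].
Proof.
elim: s => [|a' s IH] //= ha hb; rewrite In_cat.
by case: ha => [->|ha]; [left; apply: In_map|right; apply: IH].
Qed.

Lemma In_allpairsP (T T' T'' : Type) (f : T -> T' -> T'') s t c :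
  List.In c [seq f x y | x <- s, y <- t] ->
  exists a b, [/\ List.In a s, List.In b t & c = f a b].
Proof.
elim: s => [|a' s IH] //= hc.
case/In_cat: hc => [hc|/IH [a [b [ha hb ->]]]].
  by have [b <- hb] := In_mapP hc; exists a', b; split=> //; left.
by exists a, b; split=> //; right.
Qed.

Lemma In_nth (T : Type) (d : T) s a :
  List.In a s -> exists2 i, (i < size s)%N & nth d s i = a.
Proof.
elim: s => [|b s IH] //= [->|/IH [i hi <-]]; first by exists 0%N.
by exists i.+1.
Qed.

Lemma nth_In (T : Type) (d : T) s i : (i < size s)%N -> List.In (nth d s i) s.
Proof. by elim: s i => [|b s IH] [|i] //= hi; [left|right; apply: IH]. Qed.

Lemma InP (T : eqType) (x : T) s : List.In x s <-> x \in s.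
Proof.
elim: s => [|a s IH] //=; rewrite in_cons; split.
  by case=> [->|/IH ->]; rewrite ?eqxx ?orbT.
by case/orP=> [/eqP ->|/IH]; [left|right].
Qed.

(** * Coarse covers given by lists *)

Definition ball_sub (U : subset_of) (x R : nat) (W : subset_of) : Prop :=
  forall y, U y -> (dist x y <= R)%N -> W y.

(* The pointwise form of [coarse_cover], for lists of subsets. *)
Definition covers (U : subset_of) (s : seq subset_of) : Prop :=
  (forall V, List.In V s -> incl V U) /\
  forall R, exists M, forall x, (M < x)%N -> U x ->
    exists2 V, List.In V s & ball_sub U x R V.

Lemma eventually_all (T : Type) (s : seq T) (Q : T -> nat -> Prop) :
  (forall a, List.In a s -> exists M, forall x, (M < x)%N -> Q a x) ->
  exists M, forall a, List.In a s -> forall x, (M < x)%N -> Q a x.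
Proof.
elim: s => [|a s IH] H; first by exists 0%N.
have [M1 H1] := H a (or_introl erefl).
have [M2 H2] := IH (fun b hb => H b (or_intror hb)).
exists (maxn M1 M2) => b [<-|hb] x hx.
  by apply: H1; apply: leq_ltn_trans hx; exact: leq_maxl.
by apply: H2 => //; apply: leq_ltn_trans hx; exact: leq_maxr.
Qed.

Section Covers.
Implicit Types (U V W : subset_of) (s t : seq subset_of).

Lemma covers_sub U s : covers U s -> forall V, List.In V s -> incl V U.
Proof. by case. Qed.

Lemma covers_ext U U' s : (forall x, U x <-> U' x) -> covers U s -> covers U' s.
Proof.
move=> e [hs hR]; split=> [V /hs hV x /hV /e //|R].
have [M HM] := hR R; exists M => x hx /e /(HM x hx) [V hV hb].
by exists V => // y /e; apply: hb.
Qed.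

Lemma covers_single U : covers U [:: U].
Proof.
split=> [V [<-|[]] //|R]; exists 0%N => x _ _.
by exists U => [|y //]; left.
Qed.

Lemma covers_superset U s t : covers U s ->
  (forall V, List.In V s -> List.In V t) -> (forall V, List.In V t -> incl V U) ->
  covers U t.
Proof.
move=> [_ hR] hst ht; split=> // R; have [M HM] := hR R.
by exists M => x hx /(HM x hx) [V /hst hV hb]; exists V.
Qed.

Lemma covers_restr U s W : covers U s -> incl W U ->
  covers W (map (fun V => inter V W) s).
Proof.
move=> [_ hR] hWU; split=> [V hV|R]; first by have [V' <- _] := In_mapP hV; move=> x [].
have [M HM] := hR R; exists M => x hx hW.
have [V hV hb] := HM x hx (hWU x hW).
by exists (inter V W); [apply: In_map|split; [apply: hb => //; apply: hWU|]].
Qed.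

Lemma covers_meet U s t : covers U s -> covers U t ->
  covers U [seq inter a b | a <- s, b <- t].
Proof.
move=> [hs Hs] [_ Ht]; split.
  by move=> V hV; have [a [b [/hs ha _ ->]]] := In_allpairsP hV; move=> x [/ha].
move=> R; have [M1 H1] := Hs R; have [M2 H2] := Ht R.
exists (maxn M1 M2) => x hx hU.
have [a ha hba] := H1 x (leq_ltn_trans (leq_maxl _ _) hx) hU.
have [b hb hbb] := H2 x (leq_ltn_trans (leq_maxr _ _) hx) hU.
by exists (inter a b); [apply: In_allpairs|split; [apply: hba|apply: hbb]].
Qed.

Lemma covers_refine U s f : covers U s ->
  (forall V, List.In V s ->
     exists2 t, covers V t & forall W, List.In W t -> List.In W f) ->
  (forall W, List.In W f -> incl W U) -> covers U f.
Proof.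
move=> [_ hR] ht hf; split=> // R.
have [M0 H0] := hR R.
pose Q V x := V x -> exists2 W, List.In W f & ball_sub V x R W.
have hdeep V : List.In V s -> exists M, forall x, (M < x)%N -> Q V x.
  move=> /ht [t [_ htR] htf]; have [M HM] := htR R.
  by exists M => x hx /(HM x hx) [W hW hb]; exists W => //; apply: htf.
have [M1 H1] := eventually_all hdeep.
exists (maxn M0 M1) => x hx hU.
have [V hV hbV] := H0 x (leq_ltn_trans (leq_maxl _ _) hx) hU.
have hVx : V x by apply: hbV; rewrite // /dist subnn.
have [W hW hbW] := H1 V hV x (leq_ltn_trans (leq_maxr _ _) hx) hVx.
by exists W => // y hy hxy; apply: hbW => //; apply: hbV.
Qed.

Lemma covers_flatten U s (ts : subset_of -> seq subset_of) : covers U s ->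
  (forall V, List.In V s -> covers V (ts V)) -> covers U (flatten (map ts s)).
Proof.
move=> hs hts; apply: (covers_refine hs) => [V hV|W /In_flatten [t ht hW]].
  exists (ts V) => [|W hW]; first exact: hts.
  by apply/In_flatten; exists (ts V) => //; apply: In_map.
have [V eV hV] := In_mapP ht; subst t.
by move=> x /(covers_sub (hts V hV) hW) /(covers_sub hs hV).
Qed.

Lemma coarse_cover_covers U n (V : 'I_n -> subset_of) :
  coarse_cover U V -> covers U (map V (enum 'I_n)).
Proof.
move=> [hV hR]; split=> [W hW|R]; first by have [i <- _] := In_mapP hW.
have [M HM] := hR R; exists M => x hx hU; apply: contrapT => hn.
suff : (x <= M)%N by rewrite leqNgt hx.
apply: HM; split=> // i; apply: contrapT => hd; apply: hn.
exists (V i); first by apply: In_map; apply/InP; rewrite mem_enum.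
by move=> y hy hxy; apply: contrapT => hVy; apply: hd; exists y.
Qed.

Lemma covers_coarse_cover U s n (V : 'I_n -> subset_of) :
  (forall i, List.In (V i) s) -> (forall W, List.In W s -> exists i, V i = W) ->
  covers U s -> coarse_cover U V.
Proof.
move=> hVs hsV [hs hR]; split=> [i|R]; first exact: hs.
have [M HM] := hR R; exists M => x [hU hall]; rewrite leqNgt; apply/negP => hx.
have [W /hsV [i <-] hb] := HM x hx hU.
have [y [[hUy hVy] hxy]] := hall i.
by apply: hVy; apply: hb.
Qed.
End Covers.

Section SheafCovers.
Variable G : sheaf.

Lemma sheaf_bounded_eq U : bounded U -> forall x y : sec G U, x = y.
Proof.
move=> hb x y.
have hV : forall i : 'I_0, incl U U by move=> _ z.
have cc : coarse_cover U (fun _ : 'I_0 => U).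
  by split=> // R; case: hb => M hM; exists M => z [/hM].
have [sep _] := sh_sheaf G hV cc.
by apply: sep => -[m hm]; exfalso; rewrite ltn0 in hm.
Qed.

Lemma sheaf_sep U s (x y : sec G U) : covers U s ->
  (forall V (h : incl V U), List.In V s -> res h x = res h y) -> x = y.
Proof.
move=> hc H.
pose V i := nth U s (val (i : 'I_(size s))).
have cc : coarse_cover U V.
  apply: covers_coarse_cover hc => [i|W /(In_nth U) [i hi <-]].
    exact: nth_In (ltn_ord i).
  by exists (Ordinal hi).
have hV i : incl (V i) U by apply: (covers_sub hc); apply: nth_In (ltn_ord i).
have [sep _] := sh_sheaf G hV cc.
by apply: sep => i; apply: H; apply: nth_In (ltn_ord i).
Qed.

Lemma sheaf_glue U (T : eqType) (cs : seq T) (W : T -> subset_of)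
    (s : forall c, sec G (W c)) :
  covers U (map W cs) ->
  (forall c1 c2, c1 \in cs -> c2 \in cs ->
     res (@incl_interl (W c1) (W c2)) (s c1) = res (@incl_interr (W c1) (W c2)) (s c2)) ->
  exists g : sec G U, forall c (h : incl (W c) U), c \in cs -> res h g = s c.
Proof.
move=> hc hcomp.
pose V i := W (tnth (in_tuple cs) i).
have inT i : tnth (in_tuple cs) i \in cs by exact: mem_tnth.
have inV i : List.In (V i) (map W cs) by apply: In_map; apply/InP.
have cc : coarse_cover U V.
  apply: covers_coarse_cover hc => // W' hW'.
  have [c <- /InP /(tnthP (in_tuple cs)) [i ->]] := In_mapP hW'; by exists i.
have hV i : incl (V i) U by exact: (covers_sub hc).
have [_ glue] := sh_sheaf G hV cc.
have [g hg] := glue (fun i => s (tnth (in_tuple cs) i))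
  (fun i j => hcomp _ _ (inT i) (inT j)).
exists g => c h /(tnthP (in_tuple cs)) [i ei]; move: h; rewrite ei => h.
by rewrite (res_irr h (hV i)) hg.
Qed.
End SheafCovers.

(** * Epimorphisms of sheaves are locally surjective *)

Ltac incl_tac := let z := fresh "z" in let hz := fresh "hz" in
  intros z hz;
  repeat match goal with
  | H : incl ?A ?B |- _ =>
      let h := fresh "hi" in
      assert (h : B z) by (apply H; clear -hz; simpl in *; unfold inter in *; tauto);
      clear H
  | H : incl ?A ?B |- _ => clear H
  end;
  simpl in *; unfold inter in *; simpl in *; tauto.

Record local_ideal (G : sheaf) (L : forall W, sec G W -> Prop) := {
  ideal0 : forall W, L W 0;
  idealB : forall W x y, L W x -> L W y -> L W (x - y);
  ideal_res : forall W W' (h : incl W' W) x, L W x -> L W' (res h x);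
  ideal_local : forall W s x, covers W s ->
        (forall V (h : incl V W), List.In V s -> L V (res h x)) -> L W x }.
Arguments local_ideal {G} L.
Arguments ideal0 {G L} _ W.
Arguments idealB {G L} _ {W} x y.
Arguments ideal_res {G L} _ {W W'} h x.
Arguments ideal_local {G L} _ {W s x}.

(* The quotient sheaf G/L is the sheafification of the presheaf quotient: its
   sections over W are classes of finite families of local sections of G that
   cover W and are pairwise congruent modulo L. *)
Section QuotientSheaf.
Local Unset Implicit Arguments.
Variables (G : sheaf) (L : forall W, sec G W -> Prop) (HL : local_ideal L).
Local Notation lsec := {V : subset_of & sec G V}.

Lemma idealN W x : L W x -> L W (- x).
Proof. by move=> h; rewrite -sub0r; apply: (idealB HL) => //; apply: (ideal0 HL). Qed.
Lemma idealD W x y : L W x -> L W y -> L W (x + y).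
Proof. by move=> hx hy; rewrite -[y]opprK; apply: (idealB HL) => //; apply: idealN. Qed.

(* junk value 0 when Y is not contained in the domain of a *)
Definition restrict (Y : subset_of) (a : lsec) : sec G Y :=
  match pselect (incl Y (projT1 a)) with
  | left h => res h (projT2 a) | right _ => 0 end.

Lemma restrictE Y (a : lsec) (h : incl Y (projT1 a)) : res h (projT2 a) = restrict Y a.
Proof. by rewrite /restrict; case: pselect => // h'; rewrite (res_irr h h'). Qed.

Lemma restrict_mk Y W (x : sec G W) (h : incl Y W) :
  restrict Y (existT _ W x) = res h x.
Proof. by rewrite -(restrictE Y (existT _ W x) h). Qed.

Definition congruent (a b : lsec) := forall Y, incl Y (projT1 a) -> incl Y (projT1 b) ->
  L Y (restrict Y a - restrict Y b).

Lemma congruent_refl a : congruent a a.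
Proof. by move=> Y _ _; rewrite subrr; apply: (ideal0 HL). Qed.

Lemma congruent_sym a b : congruent a b -> congruent b a.
Proof. by move=> h Y hb ha; rewrite -opprB; apply: idealN; apply: h. Qed.

Record family (W : subset_of) := Family {
  fam_secs : seq lsec;
  fam_cover : covers W (map (@projT1 _ _) fam_secs);
  fam_congr : forall a b, List.In a fam_secs -> List.In b fam_secs -> congruent a b }.

Arguments fam_secs {W}. Arguments fam_cover {W}.
Arguments fam_congr {W}. Arguments Family {W}.

Lemma res_restrict Y V (a : lsec) (hY : incl Y (projT1 a)) (h : incl V Y) :
  res h (restrict Y a) = restrict V a.
Proof. by rewrite -(restrictE Y a hY) resK restrictE. Qed.

Lemma fam_sub W (p : family W) a : List.In a (fam_secs p) -> incl (projT1 a) W.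
Proof. by move=> ha; apply: (covers_sub (fam_cover p)); apply: In_map. Qed.

Definition fam_equiv W (p q : family W) :=
  forall a b, List.In a (fam_secs p) -> List.In b (fam_secs q) -> congruent a b.

Lemma fam_equiv_refl W (p : family W) : fam_equiv W p p.
Proof. exact: fam_congr. Qed.

Lemma fam_equiv_sym W (p q : family W) : fam_equiv W p q -> fam_equiv W q p.
Proof. by move=> h a b ha hb; apply: congruent_sym; apply: h. Qed.

Lemma fam_equiv_trans W (p q r : family W) :
  fam_equiv W p q -> fam_equiv W q r -> fam_equiv W p r.
Proof.
move=> hpq hqr a c ha hc Y hYa hYc.
have hYW : incl Y W by move=> z /hYa; apply: (fam_sub W p a ha).
apply: (ideal_local HL (covers_restr (fam_cover q) hYW)) => V h hV.
have [B eB hB] := In_mapP hV.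
have [b eb hb] := In_mapP hB.
rewrite res_sub !res_restrict //.
have hVb : incl V (projT1 b) by rewrite eb -eB => z [].
rewrite -[_ - restrict V c](subrKA (restrict V b)); apply: idealD.
  by apply: (hpq a b ha hb); [move=> z /h /hYa|].
by apply: (hqr b c hb hc) => // z /h /hYc.
Qed.

Tactic Notation "equiv_via" uconstr(H) := refine (fam_equiv_trans _ _ _ _ H _).

Definition lsecN (a : lsec) : lsec := existT _ (projT1 a) (- projT2 a).
Definition lsecD (a b : lsec) : lsec := existT _ (inter (projT1 a) (projT1 b))
  (res (@incl_interl _ _) (projT2 a) + res (@incl_interr _ _) (projT2 b)).
Definition lsec_res (W' : subset_of) (a : lsec) : lsec :=
  existT _ (inter (projT1 a) W') (res (@incl_interl _ _) (projT2 a)).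

Lemma restrictN Y a : incl Y (projT1 a) -> restrict Y (lsecN a) = - restrict Y a.
Proof. by move=> h; rewrite -(restrictE Y (lsecN a) h) -(restrictE Y a h) /= resN. Qed.

Lemma restrictD Y a b : incl Y (projT1 a) -> incl Y (projT1 b) ->
  restrict Y (lsecD a b) = restrict Y a + restrict Y b.
Proof.
move=> ha hb; have h : incl Y (projT1 (lsecD a b)) by incl_tac.
by rewrite -(restrictE Y (lsecD a b) h) /= resD !resK !restrictE.
Qed.

Lemma restrict_res Y W' a :
  incl Y (projT1 a) -> incl Y W' -> restrict Y (lsec_res W' a) = restrict Y a.
Proof.
move=> ha hb; have h : incl Y (projT1 (lsec_res W' a)) by incl_tac.
by rewrite -(restrictE Y (lsec_res W' a) h) /= resK restrictE.
Qed.

Definition fam0 W : family W.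
Proof.
refine (Family [:: existT (fun V => sec G V) W (0 : sec G W)] (covers_single W) _).
by move=> a b [<-|[]] [<-|[]]; apply: congruent_refl.
Defined.

Definition famN W (p : family W) : family W.
Proof.
refine (Family (map lsecN (fam_secs p)) _ _).
  apply: (covers_superset (fam_cover p)).
    move=> V hV; have [a <- ha] := In_mapP hV.
    exact: (In_map (@projT1 _ _) (In_map lsecN ha)).
  move=> V hV; have [a' <- ha'] := In_mapP hV; have [a <- ha] := In_mapP ha'.
  exact: (fam_sub W p a ha).
move=> a' b' ha' hb'; have [a <- ha] := In_mapP ha'; have [b <- hb] := In_mapP hb'.
move=> Y hA hB; rewrite !restrictN // opprK addrC.
exact: (congruent_sym _ _ (fam_congr p a b ha hb)).
Defined.

Definition famD W (p q : family W) : family W.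
Proof.
refine (Family [seq lsecD a b | a <- fam_secs p, b <- fam_secs q] _ _).
  apply: (covers_superset (covers_meet (fam_cover p) (fam_cover q))).
    move=> V hV; have [x [y [hx hy ->]]] := In_allpairsP hV.
    have [a <- ha] := In_mapP hx; have [b <- hb] := In_mapP hy.
    exact: (In_map (@projT1 _ _) (In_allpairs lsecD ha hb)).
  move=> V hV; have [c <- hc] := In_mapP hV; have [a [b [ha hb ->]]] := In_allpairsP hc.
  by move=> z [/(fam_sub W p a ha)].
move=> c c' hc hc'.
have [a [b [ha hb ->]]] := In_allpairsP hc; have [a' [b' [ha' hb' ->]]] := In_allpairsP hc'.
move=> Y hA hB; rewrite !restrictD; try incl_tac.
rewrite opprD addrACA; apply: idealD.
  by apply: (fam_congr p a a' ha ha'); incl_tac.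
by apply: (fam_congr q b b' hb hb'); incl_tac.
Defined.

Definition fam_res W W' (h : incl W' W) (p : family W) : family W'.
Proof.
refine (Family (map (lsec_res W') (fam_secs p)) _ _).
  apply: (covers_superset (covers_restr (fam_cover p) h)).
    move=> V hV; have [B <- hB] := In_mapP hV; have [a <- ha] := In_mapP hB.
    exact: (In_map (@projT1 _ _) (In_map (lsec_res W') ha)).
  move=> V hV; have [a' <- ha'] := In_mapP hV; have [a <- ha] := In_mapP ha'.
  by move=> z [].
move=> a' b' ha' hb'; have [a <- ha] := In_mapP ha'; have [b <- hb] := In_mapP hb'.
move=> Y hA hB; rewrite !restrict_res; try incl_tac.
by apply: (fam_congr p a b ha hb); incl_tac.
Defined.

Lemma famD_equiv W p p' q q' : fam_equiv W p p' -> fam_equiv W q q' ->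
  fam_equiv W (famD W p q) (famD W p' q').
Proof.
move=> hp hq c c' hc hc'.
have [a [b [ha hb ->]]] := In_allpairsP hc; have [a' [b' [ha' hb' ->]]] := In_allpairsP hc'.
move=> Y hA hB; rewrite !restrictD; try incl_tac.
rewrite opprD addrACA; apply: idealD.
  by apply: (hp a a' ha ha'); incl_tac.
by apply: (hq b b' hb hb'); incl_tac.
Qed.

Lemma famN_equiv W p p' : fam_equiv W p p' -> fam_equiv W (famN W p) (famN W p').
Proof.
move=> hp a' b' ha' hb'; have [a <- ha] := In_mapP ha'; have [b <- hb] := In_mapP hb'.
move=> Y hA hB; rewrite !restrictN // -opprD; apply: idealN; exact: hp.
Qed.

Lemma fam_res_equiv W W' (h : incl W' W) p p' :
  fam_equiv W p p' -> fam_equiv W' (fam_res W W' h p) (fam_res W W' h p').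
Proof.
move=> hp a' b' ha' hb'; have [a <- ha] := In_mapP ha'; have [b <- hb] := In_mapP hb'.
move=> Y hA hB; rewrite !restrict_res; try incl_tac.
by apply: (hp a b ha hb); incl_tac.
Qed.

Lemma famDA W p q r : fam_equiv W (famD W (famD W p q) r) (famD W p (famD W q r)).
Proof.
move=> c c' hc hc'.
have [d [e [hd he ->]]] := In_allpairsP hc; have [a [b [ha hb ->]]] := In_allpairsP hd.
have [a' [d' [ha' hd' ->]]] := In_allpairsP hc'.
have [b' [e' [hb' he' ->]]] := In_allpairsP hd'.
move=> Y hA hB; rewrite !restrictD; try incl_tac.
rewrite [restrict Y a' + _]addrA opprD addrACA; apply: idealD.
  2: by apply: (fam_congr r); try incl_tac.
rewrite opprD addrACA; apply: idealD; first by apply: (fam_congr p); try incl_tac.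
by apply: (fam_congr q); try incl_tac.
Qed.

Lemma famDC W p q : fam_equiv W (famD W p q) (famD W q p).
Proof.
move=> c c' hc hc'.
have [a [b [ha hb ->]]] := In_allpairsP hc; have [b' [a' [hb' ha' ->]]] := In_allpairsP hc'.
move=> Y hA hB; rewrite !restrictD; try incl_tac.
rewrite [restrict Y b' + _]addrC opprD addrACA; apply: idealD.
  by apply: (fam_congr p); try incl_tac.
by apply: (fam_congr q); try incl_tac.
Qed.

Lemma fam0D W p : fam_equiv W (famD W (fam0 W) p) p.
Proof.
move=> c a' hc ha'.
have [z [a [[<-|[]] ha ->]]] := In_allpairsP hc.
move=> Y hA hB; rewrite !restrictD; try incl_tac.
have hY : incl Y W by incl_tac.
rewrite (restrict_mk _ _ _ hY) res0 add0r.
by apply: (fam_congr p); try incl_tac.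
Qed.

Lemma famND W p : fam_equiv W (famD W (famN W p) p) (fam0 W).
Proof.
move=> c z hc [<-|[]].
have [a' [b [ha' hb ->]]] := In_allpairsP hc; have [a <- ha] := In_mapP ha'.
move=> Y hA hB; rewrite !restrictD; try incl_tac.
rewrite restrictN; last incl_tac.
rewrite (restrict_mk _ _ _ hB) res0 subr0 addrC.
by apply: (fam_congr p); try incl_tac.
Qed.

Lemma fam_resD W W' (h : incl W' W) p q :
  fam_equiv W' (fam_res W W' h (famD W p q))
    (famD W' (fam_res W W' h p) (fam_res W W' h q)).
Proof.
move=> c c' hc hc'.
have [d <- hd] := In_mapP hc; have [a [b [ha hb ->]]] := In_allpairsP hd.
have [x [y [hx hy ->]]] := In_allpairsP hc'.
have [a' <- ha'] := In_mapP hx; have [b' <- hb'] := In_mapP hy.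
move=> Y hA hB; rewrite !restrict_res; try incl_tac. rewrite !restrictD; try incl_tac.
rewrite !restrict_res; try incl_tac.
rewrite opprD addrACA; apply: idealD.
  by apply: (fam_congr p); try incl_tac.
by apply: (fam_congr q); try incl_tac.
Qed.

Lemma fam_resN W W' (h : incl W' W) p :
  fam_equiv W' (fam_res W W' h (famN W p)) (famN W' (fam_res W W' h p)).
Proof.
move=> c c' hc hc'.
have [d <- hd] := In_mapP hc; have [a <- ha] := In_mapP hd.
have [x <- hx] := In_mapP hc'; have [b <- hb] := In_mapP hx.
move=> Y hA hB; rewrite !restrict_res; try incl_tac. rewrite !restrictN; try incl_tac.
rewrite !restrict_res; try incl_tac.
rewrite -opprD; apply: idealN; by apply: (fam_congr p); try incl_tac.
Qed.

Lemma fam_res_id W (h : incl W W) p : fam_equiv W (fam_res W W h p) p.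
Proof.
move=> c b hc hb; have [a <- ha] := In_mapP hc.
move=> Y hA hB; rewrite !restrict_res; try incl_tac.
by apply: (fam_congr p); try incl_tac.
Qed.

Lemma fam_res_comp U V W (hVU : incl V U) (hWV : incl W V) (hWU : incl W U) p :
  fam_equiv W (fam_res V W hWV (fam_res U V hVU p)) (fam_res U W hWU p).
Proof.
move=> c c' hc hc'.
have [d <- hd] := In_mapP hc; have [a <- ha] := In_mapP hd.
have [b <- hb] := In_mapP hc'.
move=> Y hA hB; rewrite !restrict_res; try incl_tac.
by apply: (fam_congr p); try incl_tac.
Qed.

Lemma cid_ext (T : Type) (P Q : T -> Prop) (hP : exists x, P x) (hQ : exists x, Q x) :
  P = Q -> proj1_sig (cid hP) = proj1_sig (cid hQ).
Proof. by move=> E; subst Q; rewrite (Prop_irrelevance hP hQ). Qed.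

Definition fam_canon W (p : family W) : family W :=
  proj1_sig (cid (ex_intro (fun q => fam_equiv W q p) p (fam_equiv_refl W p))).

Lemma fam_canon_equiv W p : fam_equiv W (fam_canon W p) p.
Proof. by rewrite /fam_canon; case: (cid _). Qed.

Lemma fam_canon_eq W p p' : fam_equiv W p p' -> fam_canon W p = fam_canon W p'.
Proof.
move=> h; apply: cid_ext; apply: funext => q; apply: propext; split => hq.
  exact: fam_equiv_trans hq h.
exact: fam_equiv_trans hq (fam_equiv_sym _ _ _ h).
Qed.

(* [HL] occurs in the carrier so that the zmodType instance below, whose laws
   depend on it, can be found by unification after the section is closed. *)
Definition quot_sec W := let _ := HL in {p : family W | fam_canon W p = p}.

Definition qclass W (p : family W) : quot_sec W :=
  exist _ (fam_canon W p) (fam_canon_eq W _ _ (fam_canon_equiv W p)).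

Lemma quot_eq W (x y : quot_sec W) : fam_equiv W (proj1_sig x) (proj1_sig y) -> x = y.
Proof.
case: x => p hp; case: y => q hq /= h.
have e : p = q by rewrite -hp -hq; apply: fam_canon_eq.
subst q; congr exist; exact: Prop_irrelevance.
Qed.

Lemma qclass_equiv W p : fam_equiv W (proj1_sig (qclass W p)) p.
Proof. exact: fam_canon_equiv. Qed.

Lemma qclass_eq W p q : fam_equiv W p q -> qclass W p = qclass W q.
Proof.
by move=> h; apply: quot_eq; apply: (fam_equiv_trans _ _ _ _ (qclass_equiv W p));
  apply: (fam_equiv_trans _ _ _ _ h); apply: fam_equiv_sym; apply: qclass_equiv.
Qed.

Lemma qclass_val W (x : quot_sec W) : qclass W (proj1_sig x) = x.
Proof. by apply: quot_eq; apply: qclass_equiv. Qed.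

Lemma qclass_inj W p q : qclass W p = qclass W q -> fam_equiv W p q.
Proof.
move=> e; apply: (fam_equiv_trans _ _ _ _ (fam_equiv_sym _ _ _ (qclass_equiv W p))).
by rewrite e; apply: qclass_equiv.
Qed.

Definition quot0 W : quot_sec W := qclass W (fam0 W).
Definition quotN W (x : quot_sec W) : quot_sec W := qclass W (famN W (proj1_sig x)).
Definition quotD W (x y : quot_sec W) : quot_sec W :=
  qclass W (famD W (proj1_sig x) (proj1_sig y)).

Lemma quotDA W : associative (quotD W).
Proof.
move=> x y z; rewrite /quotD; apply: qclass_eq.
equiv_via (famD_equiv _ _ _ _ _ (fam_equiv_refl _ _) (qclass_equiv _ _)).
equiv_via (fam_equiv_sym _ _ _ (famDA _ _ _ _)).
apply: famD_equiv; last exact: fam_equiv_refl.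
exact: fam_equiv_sym _ _ _ (qclass_equiv _ _).
Qed.

Lemma quotDC W : commutative (quotD W).
Proof. by move=> x y; apply: qclass_eq; apply: famDC. Qed.

Lemma quot0D W : left_id (quot0 W) (quotD W).
Proof.
move=> x; rewrite /quotD -[RHS]qclass_val; apply: qclass_eq.
equiv_via (famD_equiv _ _ _ _ _ (qclass_equiv _ _) (fam_equiv_refl _ _)).
exact: fam0D.
Qed.

Lemma quotND W : left_inverse (quot0 W) (quotN W) (quotD W).
Proof.
move=> x; rewrite /quotD /quotN; apply: qclass_eq.
equiv_via (famD_equiv _ _ _ _ _ (qclass_equiv _ _) (fam_equiv_refl _ _)).
exact: famND.
Qed.

HB.instance Definition _ W := gen_eqMixin (quot_sec W).
HB.instance Definition _ W := gen_choiceMixin (quot_sec W).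
HB.instance Definition _ W :=
  GRing.isZmodule.Build (quot_sec W) (@quotDA W) (@quotDC W) (@quot0D W) (@quotND W).

Lemma quotDE W (x y : quot_sec W) : x + y = quotD W x y. Proof. by []. Qed.
Lemma quotNE W (x : quot_sec W) : - x = quotN W x. Proof. by []. Qed.
Lemma quot0E W : (0 : quot_sec W) = quot0 W. Proof. by []. Qed.

Definition quot_res U V (h : incl V U) (x : quot_sec U) : quot_sec V :=
  qclass V (fam_res U V h (sval x)).

Lemma quot_res_sub U V (h : incl V U) (x y : quot_sec U) :
  quot_res U V h (x - y) = quot_res U V h x - quot_res U V h y.
Proof.
rewrite !quotDE !quotNE /quotD /quotN /quot_res; apply: qclass_eq.
equiv_via (fam_res_equiv _ _ h _ _ (qclass_equiv _ _)).
equiv_via (fam_res_equiv _ _ h _ _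
  (famD_equiv _ _ _ _ _ (fam_equiv_refl _ _) (qclass_equiv _ _))).
equiv_via (fam_resD _ _ h _ _).
apply: fam_equiv_sym.
equiv_via (famD_equiv _ _ _ _ _ (qclass_equiv _ _) (qclass_equiv _ _)).
apply: famD_equiv; first exact: fam_equiv_refl.
equiv_via (famN_equiv _ _ _ (qclass_equiv _ _)).
exact: fam_equiv_sym _ _ _ (fam_resN _ _ _ _).
Qed.

Lemma quot_res_id U (h : incl U U) (x : quot_sec U) : quot_res U U h x = x.
Proof. by rewrite /quot_res -[RHS]qclass_val; apply: qclass_eq; apply: fam_res_id. Qed.

Lemma quot_res_comp U V W (hVU : incl V U) (hWV : incl W V) (hWU : incl W U)
    (x : quot_sec U) :
  quot_res V W hWV (quot_res U V hVU x) = quot_res U W hWU x.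
Proof.
rewrite /quot_res; apply: qclass_eq.
equiv_via (fam_res_equiv _ _ hWV _ _ (qclass_equiv _ _)).
exact: fam_res_comp.
Qed.

Definition quot_presheaf : presheaf :=
  @Presheaf (fun W => (quot_sec W : zmodType))
    quot_res quot_res_sub quot_res_id quot_res_comp.

Lemma restrict_res_mk Y W W' (h : incl W' W) (g : sec G W) : incl Y W' ->
  restrict Y (existT _ W' (res h g)) = restrict Y (existT _ W g).
Proof.
move=> hY; rewrite (restrict_mk _ _ _ hY) resK.
by rewrite (restrict_mk Y W g (fun z hz => h z (hY z hz))).
Qed.

Lemma quot_separated U n (V : 'I_n -> subset_of) (hV : forall i, incl (V i) U) :
  coarse_cover U V -> forall x y : quot_sec U,
  (forall i, quot_res U (V i) (hV i) x = quot_res U (V i) (hV i) y) -> x = y.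
Proof.
move=> cc x y hxy; apply: quot_eq => a b ha hb Y hA hB.
have hYU : incl Y U by move=> z /hA; apply: (fam_sub _ _ a ha).
apply: (ideal_local HL (covers_restr (coarse_cover_covers cc) hYU)) => P hP hPin.
have [Q eQ hQ] := In_mapP hPin; have [i eV _] := In_mapP hQ.
rewrite res_sub !res_restrict //.
have := qclass_inj _ _ _ (hxy i) (lsec_res (V i) a) (lsec_res (V i) b)
  (In_map _ ha) (In_map _ hb) P.
rewrite -eQ -eV in hP *.
rewrite !restrict_res; try incl_tac.
by apply; incl_tac.
Qed.

Lemma quot_glue U n (V : 'I_n -> subset_of) (hV : forall i, incl (V i) U) :
  coarse_cover U V -> forall t : forall i, quot_sec (V i),
  (forall i j, quot_res _ _ (@incl_interl (V i) (V j)) (t i) =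
               quot_res _ _ (@incl_interr (V i) (V j)) (t j)) ->
  exists x : quot_sec U, forall i, quot_res U (V i) (hV i) x = t i.
Proof.
move=> cc t ht.
pose secs := flatten [seq fam_secs (sval (t i)) | i <- enum 'I_n].
have secsP a : List.In a secs -> exists i, List.In a (fam_secs (sval (t i))).
  by case/In_flatten=> l hl ha; have [i el _] := In_mapP hl; exists i; rewrite el.
have in_secs i a : List.In a (fam_secs (sval (t i))) -> List.In a secs.
  move=> ha; apply/In_flatten; exists (fam_secs (sval (t i))) => //.
  by apply: In_map; apply/InP; rewrite mem_enum.
have hcongr a b : List.In a secs -> List.In b secs -> congruent a b.
  move=> /secsP [i ha] /secsP [j hb] Y hA hB.
  have hYi : incl Y (V i) by move=> z /hA; apply: (fam_sub _ _ a ha).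
  have hYj : incl Y (V j) by move=> z /hB; apply: (fam_sub _ _ b hb).
  have := qclass_inj _ _ _ (ht i j) (lsec_res (inter (V i) (V j)) a)
    (lsec_res (inter (V i) (V j)) b) (In_map _ ha) (In_map _ hb) Y.
  rewrite !restrict_res; try incl_tac.
  by apply; incl_tac.
have hcov : covers U (map (@projT1 _ _) secs).
  apply: (covers_refine (coarse_cover_covers cc)).
    move=> W hW; have [i <- _] := In_mapP hW.
    exists (map (@projT1 _ _) (fam_secs (sval (t i)))); first exact: fam_cover.
    by move=> W' hW'; have [a <- ha] := In_mapP hW'; apply: In_map; apply: in_secs ha.
  move=> W hW; have [a <- ha] := In_mapP hW; have [i hai] := secsP a ha.
  by move=> z /(fam_sub _ _ a hai) /(hV i).
exists (qclass U (Family secs hcov hcongr)) => i.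
rewrite /= /quot_res -[RHS]qclass_val; apply: qclass_eq.
equiv_via (fam_res_equiv _ _ _ _ _ (qclass_equiv _ _)).
move=> c a hc ha; have [c' <- hc'] := In_mapP hc.
move=> Y hA hB; rewrite restrict_res; try incl_tac.
by apply: (hcongr c' a hc' (in_secs i a ha)); incl_tac.
Qed.

Lemma quot_is_sheaf : is_sheaf quot_presheaf.
Proof. by move=> U n V hV cc; split; [apply: quot_separated|apply: quot_glue]. Qed.

Definition quot_sheaf : sheaf := Sheaf quot_is_sheaf.

Definition fam_single W (g : sec G W) : family W.
Proof.
refine (Family [:: existT (fun V => sec G V) W g] (covers_single W) _).
by move=> a b [<-|[]] [<-|[]]; apply: congruent_refl.
Defined.

Lemma quot_proj_sub W (x y : sec G W) :
  qclass W (fam_single W (x - y)) = qclass W (fam_single W x) - qclass W (fam_single W y).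
Proof.
rewrite quotDE quotNE /quotD /quotN; apply: qclass_eq.
apply: fam_equiv_sym.
equiv_via (famD_equiv _ _ _ _ _ (qclass_equiv _ _) (qclass_equiv _ _)).
equiv_via (famD_equiv _ _ _ _ _ (fam_equiv_refl _ _) (famN_equiv _ _ _ (qclass_equiv _ _))).
move=> c b hc [<-|[]].
have [a [a' [[<-|[]] ha' ->]]] := In_allpairsP hc; have [z [<- [<-|[]]]] := In_mapP ha'.
move=> Y hA hB; rewrite restrictD; try incl_tac.
rewrite restrictN; last incl_tac.
have hYW : incl Y W by incl_tac.
rewrite !(restrict_mk _ _ _ hYW) res_sub subrr; exact: (ideal0 HL).
Qed.

Lemma quot_proj_nat U V (h : incl V U) (g : sec G U) :
  qclass V (fam_single V (res h g)) = quot_res U V h (qclass U (fam_single U g)).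
Proof.
rewrite /quot_res; apply: qclass_eq; apply: fam_equiv_sym.
equiv_via (fam_res_equiv _ _ _ _ _ (qclass_equiv _ _)).
move=> c b hc [<-|[]]; have [a [<- [<-|[]]]] := In_mapP hc.
move=> Y hA hB; rewrite restrict_res; try incl_tac.
rewrite restrict_res_mk; last incl_tac.
rewrite subrr; exact: (ideal0 HL).
Qed.

Definition quot_proj : pmorph G quot_presheaf :=
  @PMorph G quot_presheaf (fun W g => qclass W (fam_single W g))
    quot_proj_sub quot_proj_nat.

Lemma quot_proj_eq0 W (g : sec G W) : mapp quot_proj g = 0 -> L W g.
Proof.
move=> /= e; rewrite quot0E /quot0 in e.
have := qclass_inj _ _ _ e (existT (fun V => sec G V) W g)
  (existT (fun V => sec G V) W (0 : sec G W)) (or_introl erefl) (or_introl erefl) W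
  (fun _ h => h) (fun _ h => h).
by rewrite !(restrict_mk _ _ _ (fun _ h => h)) res_id res0 subr0.
Qed.

Lemma quot_proj_ideal W (g : sec G W) : L W g -> mapp quot_proj g = 0.
Proof.
move=> hg /=; rewrite quot0E /quot0; apply: qclass_eq.
move=> a b [<-|[]] [<-|[]] Y hA hB.
rewrite !(restrict_mk _ _ _ hA) res0 subr0; exact: (ideal_res HL).
Qed.

End QuotientSheaf.
Arguments quot_sheaf {G L} HL.
Arguments quot_proj {G L} HL.
Arguments quot_proj_eq0 {G L} HL {W} g.
Arguments quot_proj_ideal {G L} HL {W} g.

Definition locally_in_image (P : presheaf) (G : sheaf) (f : pmorph P G)
    (U : subset_of) (g : sec G U) : Prop :=
  exists2 s, covers U s &
    forall V (h : incl V U), List.In V s -> exists x : sec P V, mapp f x = res h g.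
Arguments locally_in_image {P G} f U g.

Lemma locally_in_image_ideal (P : presheaf) (G : sheaf) (f : pmorph P G) :
  local_ideal (locally_in_image f).
Proof.
split.
- move=> W; exists [:: W]; first exact: covers_single.
  by move=> V h _; exists 0; rewrite mapp0 res0.
- move=> W x y [s hs Hs] [t ht Ht].
  exists [seq inter a b | a <- s, b <- t]; first exact: covers_meet.
  move=> V h hV; have [a [b [ha hb eV]]] := In_allpairsP hV; subst V.
  have [xa exa] := Hs a (covers_sub hs ha) ha.
  have [yb eyb] := Ht b (covers_sub ht hb) hb.
  exists (res (@incl_interl a b) xa - res (@incl_interr a b) yb).
  by rewrite mapp_sub !mapp_nat exa eyb !resK res_sub; congr (_ - _); apply: res_irr.
- move=> W W' h x [s hs Hs].
  exists (map (fun V => inter V W') s); first exact: (covers_restr hs h).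
  move=> V hV hVin; have [a eV ha] := In_mapP hVin; subst V.
  have [xa exa] := Hs a (covers_sub hs ha) ha.
  exists (res (@incl_interl a W') xa).
  by rewrite mapp_nat exa !resK; apply: res_irr.
- move=> W s x hs H.
  pose lifts t := forall V (h : incl V W), List.In V t ->
    exists y : sec P V, mapp f y = res h x.
  have hex V : exists t, List.In V s -> covers V t /\ lifts t.
    case: (pselect (List.In V s)) => hV; last by exists [::].
    have [t ht Ht] := H V (covers_sub hs hV) hV; exists t => _; split=> // V' h' hV'.
    have [y ey] := Ht V' (covers_sub ht hV') hV'.
    by exists y; rewrite ey resK; apply: res_irr.
  have [ts hts] := choice hex.
  exists (flatten (map ts s)); first by apply: covers_flatten => // V /hts [].
  move=> V h /In_flatten [t ht hV]; have [V' et hV'] := In_mapP ht; subst t.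
  exact: (proj2 (hts V' hV') V h hV).
Qed.

Definition sheaf_epic (P : presheaf) (G : sheaf) (f : pmorph P G) : Prop :=
  forall (H : sheaf) (a b : pmorph G H),
    (forall U (x : sec P U), mapp a (mapp f x) = mapp b (mapp f x)) ->
    forall U (y : sec G U), mapp a y = mapp b y.

Lemma sheafification_epic (P : presheaf) (S : sheaf) (eta : pmorph P S) :
  is_sheafification eta -> sheaf_epic eta.
Proof.
move=> hsh H a b hab U y; have [psi [_ huniq]] := hsh H (pmorph_comp eta a).
by rewrite (huniq a (fun _ _ => erefl)) (huniq b (fun U x => esym (hab U x))).
Qed.

Lemma epi_locally_surjective (P : presheaf) (G : sheaf) (f : pmorph P G) :
  sheaf_epic f -> forall U (g : sec G U), locally_in_image f U g.
Proof.
move=> epi U g; pose HL := locally_in_image_ideal f.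
apply: (quot_proj_eq0 HL).
have -> : mapp (quot_proj HL) g = mapp (pmorph0 G (quot_sheaf HL)) g.
  apply: (epi (quot_sheaf HL)) => V x; apply: (quot_proj_ideal HL).
  exists [:: V]; first exact: covers_single.
  by move=> V' h _; exists (res h x); rewrite mapp_nat.
by [].
Qed.

Lemma locally_in_image_comp (P : presheaf) (G H : sheaf) (f : pmorph P G)
    (k : pmorph G H) U (g : sec G U) :
  locally_in_image f U g -> locally_in_image (pmorph_comp f k) U (mapp k g).
Proof.
case=> s hs Hs; exists s => // V h hV.
by have [x ex] := Hs V h hV; exists x; rewrite /= ex mapp_nat.
Qed.

Lemma locally_in_image_lift (P : presheaf) (G : sheaf) (f : pmorph P G) U (g : sec G U) :
  locally_in_image f U g ->
  exists2 l : seq {V : subset_of & sec P V}, covers U (map (@projT1 _ _) l) &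
    forall a (h : incl (projT1 a) U), List.In a l -> mapp f (projT2 a) = res h g.
Proof.
case=> s hs Hs.
suff [l el hl] : exists2 l : seq {V : subset_of & sec P V}, map (@projT1 _ _) l = s &
    forall a (h : incl (projT1 a) U), List.In a l -> mapp f (projT2 a) = res h g.
  by exists l; rewrite ?el.
elim: s {hs} (covers_sub hs) Hs => [|V s IH] hsub H; first by exists [::].
have [x ex] := H V (hsub V (or_introl erefl)) (or_introl erefl).
have [l el hl] :=
  IH (fun W hW => hsub W (or_intror hW)) (fun W h hW => H W h (or_intror hW)).
exists (existT _ V x :: l); first by rewrite /= el.
move=> a h [ea|ha]; last exact: hl.
by subst a; rewrite /= ex; apply: res_irr.
Qed.

(** * Overlapping blocks of slowly growing length *)

Local Close Scope ring_scope.

(* Cut points c_i with steps l_i = c_(i+1) - c_i; the step grows by one only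
   once the cut point has passed [thr (3 * (l_i + 1))], so that
   [thr (3 * l_i) < c_i] always holds while l_i still tends to infinity. *)
Fixpoint schedule (thr : nat -> nat) (i : nat) : nat * nat :=
  match i with
  | 0 => ((thr 3).+1, 1)
  | i'.+1 => let: (c, l) := schedule thr i' in
             (c + l, if thr (3 * l.+1) < c + l then l.+1 else l)
  end.

Section Schedule.
Variable thr : nat -> nat.
Definition cut i := (schedule thr i).1.
Definition step i := (schedule thr i).2.

Lemma cut_succ i : cut i.+1 = cut i + step i.
Proof. by rewrite /cut /step /=; case: (schedule thr i). Qed.

Lemma step_succ i :
  step i.+1 = if thr (3 * (step i).+1) < cut i.+1 then (step i).+1 else step i.
Proof. by rewrite cut_succ /cut /step /=; case: (schedule thr i). Qed.

Lemma step_gt0 i : 0 < step i.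
Proof. elim: i => [//|i IH]; rewrite step_succ; case: ifP => //. Qed.

Lemma step_le_succ i : step i <= step i.+1.
Proof. by rewrite step_succ; case: ifP. Qed.

Lemma step_mono i j : i <= j -> step i <= step j.
Proof.
move=> /subnK <-; elim: (j - i) => [|d IH]; first by rewrite add0n.
by apply: (leq_trans IH); rewrite addSn; apply: step_le_succ.
Qed.

Lemma cut_lt_succ i : cut i < cut i.+1.
Proof. by rewrite cut_succ -[X in X < _]addn0 ltn_add2l step_gt0. Qed.

Lemma cut_mono i j : i <= j -> cut i <= cut j.
Proof.
move=> /subnK <-; elim: (j - i) => [|d IH]; first by rewrite add0n.
by apply: (leq_trans IH); rewrite addSn; apply: ltnW; apply: cut_lt_succ.
Qed.

Lemma cut_ge i : i <= cut i.
Proof. elim: i => [//|i IH]; exact: (leq_ltn_trans IH (cut_lt_succ i)). Qed.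

Lemma thr_step_lt_cut i : thr (3 * step i) < cut i.
Proof.
elim: i => [|i IH]; first by rewrite /cut /step /=.
rewrite step_succ; case: ifP => // _.
by apply: (leq_trans IH); apply: ltnW; apply: cut_lt_succ.
Qed.

Lemma step_unbounded r : exists i, r <= step i.
Proof.
elim: r => [|r [i hi]]; first by exists 0.
apply: contrapT => /forallNP hlt.
have stuck j : step (i + j) = r.
  by have := step_mono (leq_addr j i); have := hlt (i + j); lia.
set T := thr (3 * r.+1).
have hT : T < cut (i + T).+1 by apply: leq_trans (cut_ge _); rewrite ltnS leq_addl.
by have := stuck T.+1; rewrite addnS step_succ stuck hT; lia.
Qed.

Lemma cut_locate x : cut 0 <= x -> exists i, cut i <= x < cut i.+1.
Proof.
move=> h0.
have hex : exists i, x < cut i by exists x.+1; apply: (leq_trans _ (cut_ge _)).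
have [i hi hmin] := ex_minnP hex.
case: i hi hmin => [|i] hi hmin; first by rewrite ltnNge h0 in hi.
exists i; rewrite hi andbT leqNgt; apply/negP => h.
by have := hmin i h; rewrite ltnn.
Qed.

Definition block k : subset_of := fun x => cut k.*2 <= x < cut k.*2.+3.
Definition overlap k : subset_of := fun x => cut k.*2.+2 <= x < cut k.*2.+3.

Lemma cut_steps k :
  [/\ cut k.+1 = cut k + step k, cut k.+2 = cut k.+1 + step k.+1,
      cut k.+3 = cut k.+2 + step k.+2, cut k.+4 = cut k.+3 + step k.+3
    & cut k.+4.+1 = cut k.+4 + step k.+4].
Proof. by rewrite !cut_succ. Qed.

Lemma step_chain k : [/\ step k <= step k.+1, step k.+1 <= step k.+2, step k.+2 <= step k.+3
   & step k.+3 <= step k.+4].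
Proof. by rewrite !step_le_succ. Qed.

Lemma overlap_block k : incl (overlap k) (block k).
Proof.
move=> x; rewrite /overlap /block => /andP [h1 h2]; rewrite h2 andbT.
apply: leq_trans h1; apply: cut_mono; lia.
Qed.

Lemma overlap_block_succ k : incl (overlap k) (block k.+1).
Proof.
move=> x; rewrite /overlap /block => /andP [h1 h2].
have : cut k.*2.+3 <= cut (k.+1).*2.+3 by apply: cut_mono; lia.
rewrite doubleS; lia.
Qed.

Lemma block_ball k y : block k y -> dist (cut k.*2.+2) y <= 3 * step k.*2.+2.
Proof.
rewrite /block /dist => /andP [h1 h2].
have [e1 e2 e3 _ _] := cut_steps k.*2.
have [l1 l2 _ _] := step_chain k.*2.
lia.
Qed.

Lemma overlap_center k : overlap k (cut k.*2.+2).
Proof. by rewrite /overlap leqnn /= (cut_succ k.*2.+2); have := step_gt0 k.*2.+2; lia. Qed.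

Lemma block_meet k k' x : block k x -> block k' x -> k <> k' ->
  (k' = k.+1 /\ overlap k x) \/ (k = k'.+1 /\ overlap k' x).
Proof.
rewrite /block /overlap => /andP [h1 h2] /andP [h3 h4] hne.
case: (ltngtP k k') => hk; last by [].
- case: (ltngtP k.+1 k') => hk2.
  + have : cut k.*2.+3 <= cut k'.*2 by apply: cut_mono; lia.
    lia.
  + lia.
  + by left; split=> //; subst k'; rewrite doubleS in h3; rewrite h3 h2.
- case: (ltngtP k'.+1 k) => hk2.
  + have : cut k'.*2.+3 <= cut k.*2 by apply: cut_mono; lia.
    lia.
  + lia.
  + by right; split=> //; subst k; rewrite doubleS in h1; rewrite h1 h4.
Qed.

Lemma block_cover R :
  exists N, forall x, N < x -> exists k, forall y, dist x y <= R -> block k y.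
Proof.
have [i0 hi0] := step_unbounded R.*2.
exists (cut i0.+1) => x hx.
have [i /andP [hi1 hi2]] := cut_locate (leq_trans (cut_mono (leq0n i0.+1)) (ltnW hx)).
have hii : i0 < i.
  rewrite ltnNge; apply/negP => h.
  have h' : i.+1 <= i0.+1 by [].
  have := cut_mono h'; lia.
have hl : forall j, i.-1 <= j -> R.*2 <= step j.
  by move=> j hj; apply: (leq_trans hi0); apply: step_mono; lia.
move: (odd_double_half i); set k := i./2; clearbody k.
case: (odd i) => ei; rewrite ?add0n ?add1n in ei; subst i; last first.
- case: k hii hi1 hi2 hl => [|k] hii hi1 hi2 hl; first by lia.
  rewrite doubleS in hi1 hi2 hl.
  have [e1 e2 e3 e4 e5] := cut_steps k.*2.
  have l0 := hl k.*2.+1 ltac:(lia); have l1 := hl k.*2.+2 ltac:(lia);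
  have l2 := hl k.*2.+3 ltac:(lia).
  case: (ltnP (x + R) (cut k.*2.+3)) => hxr.
    exists k => y; rewrite /block /dist => hy.
    have := cut_mono (leq0n 0); lia.
  exists k.+1 => y; rewrite /block /dist doubleS => hy; lia.
- have [e1 e2 e3 e4 e5] := cut_steps k.*2.
  have l0 := hl k.*2 ltac:(lia); have l1 := hl k.*2.+1 ltac:(lia);
  have l2 := hl k.*2.+2 ltac:(lia).
  exists k => y; rewrite /block /dist => hy; lia.
Qed.

Lemma overlap_far_apart R : exists N, forall k k' x y,
  k <> k' -> N <= k -> overlap k x -> overlap k' y -> R < dist x y.
Proof.
have [i1 hi1] := step_unbounded R.+1.
exists i1 => k k' x y hne hN; rewrite /overlap /dist => /andP [h1 h2] /andP [h3 h4].
case: (ltngtP k k') => hk; last by [].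
- have hc : cut k.*2.+4 <= cut k'.*2.+2 by apply: cut_mono; lia.
  have := cut_succ k.*2.+3; have := step_mono (_ : i1 <= k.*2.+3); lia.
- have hc : cut k'.*2.+3 <= cut k.*2.+1 by apply: cut_mono; lia.
  have := cut_succ k.*2.+1; have := step_mono (_ : i1 <= k.*2.+1); lia.
Qed.

Lemma overlap_bounded N : exists M, forall k x, k < N -> overlap k x -> x <= M.
Proof.
exists (cut N.*2.+3) => k x hk; rewrite /overlap => /andP [_ h].
apply: ltnW; apply: (leq_trans h); apply: cut_mono; lia.
Qed.
End Schedule.

(* Far out, an R-ball meets at most one of the sets O k, so grouping them
   according to finitely many labels yields a coarse cover of their union. *)
Lemma separated_groups_cover (O : nat -> subset_of) (sel : nat -> Prop)
    (L : eqType) (ls : seq L) (lab : nat -> L) :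
  (forall N, exists M, forall k x, k < N -> O k x -> x <= M) ->
  (forall R, exists N, forall k k' x y,
     k <> k' -> N <= k -> O k x -> O k' y -> R < dist x y) ->
  (forall k, lab k \in ls) ->
  covers (fun x => exists k, sel k /\ O k x)
         [seq (fun x => exists k, [/\ sel k, lab k = l & O k x]) | l <- ls].
Proof.
move=> hbd hsep hlab; split=> [V hV|R].
  by have [l <- _] := In_mapP hV; move=> x [k [? _ ?]]; exists k.
have [N HN] := hsep R; have [M HM] := hbd N.
exists M => x hx [k [hk hOk]].
have hkN : N <= k by rewrite leqNgt; apply/negP => /(HM k x)/(_ hOk); rewrite leqNgt hx.
exists (fun x => exists k', [/\ sel k', lab k' = lab k & O k' x]).
  apply: (In_map (fun l x => exists k, [/\ sel k, lab k = l & O k x])).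
  exact/InP.
move=> y [k' [hk' hOk']] hxy; case: (eqVneq k k') => [ek|hne]; first by subst k'; exists k.
by have := HN k k' x y (elimN eqP hne) hkN hOk hOk'; rewrite ltnNge hxy.
Qed.

(* The labels [kind k] and [link k] range over finite lists; this is what makes
   the pieces and the junctions finite coarse covers. *)
Section ChainGluing.
Variables (thr : nat -> nat) (S : sheaf).
Variables (T : eqType) (cs : seq T) (D : T -> subset_of) (tau : forall c, sec S (D c)).
Variable kind : nat -> T.
Hypothesis kind_in : forall k, kind k \in cs.
Hypothesis block_D : forall k, incl (block thr k) (D (kind k)).
Variables (L : eqType) (ls : seq L) (link : nat -> L) (P : L -> subset_of).
Hypothesis link_in : forall k, link k \in ls.
Hypothesis overlap_P : forall k, incl (overlap thr k) (P (link k)).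
Hypothesis P_D : forall k, incl (P (link k)) (D (kind k)).
Hypothesis P_D_succ : forall k, incl (P (link k)) (D (kind k.+1)).
Hypothesis tau_link :
  forall k, res (@P_D k) (tau (kind k)) = res (@P_D_succ k) (tau (kind k.+1)).

Definition piece c : subset_of := fun x => exists k, kind k = c /\ block thr k x.

Definition adjacent c1 c2 k : Prop :=
  (kind k = c1 /\ kind k.+1 = c2) \/ (kind k = c2 /\ kind k.+1 = c1).

Definition junction c1 c2 l : subset_of :=
  fun x => exists k, [/\ adjacent c1 c2 k, link k = l & overlap thr k x].

Lemma piece_D c : incl (piece c) (D c).
Proof. by move=> x [k [<-]]; apply: block_D. Qed.

Lemma pieces_cover : covers Defs.setX (map piece cs).
Proof.
split=> // R; have [N HN] := block_cover thr R; exists N => x hx _.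
have [k hk] := HN x hx; exists (piece (kind k)).
  by apply: In_map; apply/InP.
by move=> y _ /hk; exists k.
Qed.

Lemma junctions_cover c1 c2 : c1 != c2 ->
  covers (inter (piece c1) (piece c2)) (map (junction c1 c2) ls).
Proof.
move=> hne; apply: covers_ext (separated_groups_cover (adjacent c1 c2)
  (overlap_bounded thr) (overlap_far_apart thr) link_in) => x; split.
  move=> [k [[[e1 e2]|[e1 e2]] hO]].
    by split; [exists k|exists k.+1]; split=> //;
      [apply: overlap_block|apply: overlap_block_succ].
  by split; [exists k.+1|exists k]; split=> //;
    [apply: overlap_block_succ|apply: overlap_block].
move=> [[k1 [e1 hk1]] [k2 [e2 hk2]]].
have hk12 : k1 <> k2 by move=> ek; move: hne; rewrite -e1 -e2 ek eqxx.
case: (block_meet hk1 hk2 hk12) => [[ek hO]|[ek hO]]; subst.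
  by exists k1; split=> //; left.
by exists k2; split=> //; right.
Qed.

Lemma tau_link_on k W (hP : incl W (P (link k)))
    (h1 : incl W (D (kind k))) (h2 : incl W (D (kind k.+1))) :
  res h1 (tau (kind k)) = res h2 (tau (kind k.+1)).
Proof.
have := congr1 (res hP) (tau_link k); rewrite !resK.
rewrite (res_irr h1 (fun z hz => @P_D k z (hP z hz))).
by rewrite (res_irr h2 (fun z hz => @P_D_succ k z (hP z hz))).
Qed.

Lemma tau_junction c1 c2 l (h1 : incl (junction c1 c2 l) (D c1))
    (h2 : incl (junction c1 c2 l) (D c2)) :
  res h1 (tau c1) = res h2 (tau c2).
Proof.
case: (pselect (exists k, adjacent c1 c2 k /\ link k = l)) => [[k [hk hl]]|hnone].
  have hP : incl (junction c1 c2 l) (P (link k)).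
    by move=> x [k' [_ hl' hO]]; rewrite hl -hl'; apply: overlap_P.
  case: hk => [[e1 e2]|[e1 e2]]; move: h1 h2 hP; rewrite -e1 -e2 => h1 h2 hP.
    exact: (tau_link_on hP h1 h2).
  exact: esym (tau_link_on hP h2 h1).
apply: sheaf_bounded_eq; exists 0 => x [k [hk hl _]].
by case: hnone; exists k.
Qed.

Lemma chain_glue : exists g : sec S Defs.setX,
  forall c (h : incl (piece c) Defs.setX), c \in cs -> res h g = res (@piece_D c) (tau c).
Proof.
apply: (sheaf_glue pieces_cover) => c1 c2 _ _.
case: (eqVneq c1 c2) => [<-|hne]; first by rewrite !resK; apply: res_irr.
apply: (sheaf_sep (junctions_cover hne)) => J hJ hJin.
have [l eJ _] := In_mapP hJin; subst J.
by rewrite !resK; apply: tau_junction.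
Qed.
End ChainGluing.

(** * Gluing with finite coefficients *)

Local Open Scope ring_scope.

Section CechGluing.
Variables (A : finZmodType) (S : sheaf) (phi : pmorph (cst_presheaf A) S).
Variables (n : nat) (V : nat -> subset_of) (t : forall j, sec S (V j)).
Variable diff_lifts : nat -> nat -> seq {W : subset_of & sec (cst_presheaf A) W}.
Hypothesis V_cover : covers Defs.setX (map V (iota 0 n)).
Hypothesis diff_lifts_cover : forall j1 j2, (j1 < n)%N -> (j2 < n)%N ->
  covers (inter (V j1) (V j2)) (map (@projT1 _ _) (diff_lifts j1 j2)).
Hypothesis diff_lifts_spec : forall j1 j2 u (h : incl (projT1 u) (inter (V j1) (V j2))),
  (j1 < n)%N -> (j2 < n)%N -> List.In u (diff_lifts j1 j2) ->
  mapp phi (projT2 u) =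
  res h (res (@incl_interl _ _) (t j1) - res (@incl_interr _ _) (t j2)).

Let dlift : {W : subset_of & sec (cst_presheaf A) W} := existT _ Defs.setX (0 : A).
Definition lift_dom j1 j2 m : subset_of := projT1 (nth dlift (diff_lifts j1 j2) m).
Definition lift_val j1 j2 m : A := projT2 (nth dlift (diff_lifts j1 j2) m).

Lemma lift_dom_sub j1 j2 m : (j1 < n)%N -> (j2 < n)%N -> (m < size (diff_lifts j1 j2))%N ->
  incl (lift_dom j1 j2 m) (inter (V j1) (V j2)).
Proof.
by move=> h1 h2 hm; apply: (covers_sub (diff_lifts_cover h1 h2)); apply/In_map/nth_In.
Qed.

Lemma lift_dom_deep j1 j2 R : (j1 < n)%N -> (j2 < n)%N -> exists M, forall x, (M < x)%N ->
  inter (V j1) (V j2) x ->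
  exists m, (m < size (diff_lifts j1 j2))%N /\
    ball_sub (inter (V j1) (V j2)) x R (lift_dom j1 j2 m).
Proof.
move=> h1 h2; have [_ /(_ R) [M HM]] := diff_lifts_cover h1 h2.
exists M => x hx /(HM x hx) [W hW hb].
have [u eu hu] := In_mapP hW; have [m hm em] := In_nth dlift hu.
by exists m; split=> //; rewrite /lift_dom em eu.
Qed.

Definition deep_at R x : Prop :=
  (exists j, (j < n)%N /\ ball_sub Defs.setX x R (V j)) /\
  (forall j1 j2, (j1 < n)%N -> (j2 < n)%N -> inter (V j1) (V j2) x ->
     exists m, (m < size (diff_lifts j1 j2))%N /\
       ball_sub (inter (V j1) (V j2)) x R (lift_dom j1 j2 m)).

Definition deep_threshold (thr : nat -> nat) : Prop :=
  forall R x, (thr R < x)%N -> deep_at R x.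

Lemma deep_threshold_exists : exists thr, deep_threshold thr.
Proof.
suff /choice [thr hthr] : forall R, exists M, forall x, (M < x)%N -> deep_at R x.
  by exists thr => R; apply: hthr.
move=> R; have [_ /(_ R) [M1 H1]] := V_cover.
pose Q (p : nat * nat) x := inter (V p.1) (V p.2) x ->
  exists m, (m < size (diff_lifts p.1 p.2))%N /\
    ball_sub (inter (V p.1) (V p.2)) x R (lift_dom p.1 p.2 m).
have hQ p : List.In p [seq (j1, j2) | j1 <- iota 0 n, j2 <- iota 0 n] ->
    exists M, forall x, (M < x)%N -> Q p x.
  move=> /InP /allpairsP [[j1 j2] [/= h1 h2 ->]].
  by rewrite !mem_iota /= in h1 h2; apply: lift_dom_deep.
have [M2 H2] := eventually_all hQ.
exists (maxn M1 M2) => x; rewrite gtn_max => /andP [hx1 hx2]; split.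
  have [W hW hb] := H1 x hx1 I; have [j ej hj] := In_mapP hW; subst W.
  by exists j; split=> //; move/InP: hj; rewrite mem_iota.
move=> j1 j2 h1 h2; apply: (H2 (j1, j2)) => //; apply/InP.
by apply: allpairs_f; rewrite mem_iota.
Qed.

Lemma block_in_cover thr : deep_threshold thr ->
  forall k, exists j, (j < n)%N /\ incl (block thr k) (V j).
Proof.
move=> hthr k; have [[j [hj hb]] _] := hthr _ _ (thr_step_lt_cut thr k.*2.+2).
by exists j; split=> // y hy; apply: hb => //; apply: block_ball.
Qed.

Lemma overlap_in_lift_dom thr (jf : nat -> nat) : deep_threshold thr ->
  (forall k, (jf k < n)%N /\ incl (block thr k) (V (jf k))) ->
  forall k, exists m, (m < size (diff_lifts (jf k) (jf k.+1)))%N /\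
    incl (overlap thr k) (lift_dom (jf k) (jf k.+1) m).
Proof.
move=> hthr hjf k; have [hj1 hb1] := hjf k; have [hj2 hb2] := hjf k.+1.
have hO : incl (overlap thr k) (inter (V (jf k)) (V (jf k.+1))).
  by move=> x hx; split; [apply/hb1/overlap_block|apply/hb2/overlap_block_succ].
have [_ deep] := hthr _ _ (thr_step_lt_cut thr k.*2.+2).
have [m [hm hb]] := deep _ _ hj1 hj2 (hO _ (overlap_center thr k)).
by exists m; split=> // y hy; apply: hb; [apply: hO|apply/block_ball/overlap_block].
Qed.

Lemma corrected_agree j1 j2 m (a : A) (h1 : incl (lift_dom j1 j2 m) (V j1))
    (h2 : incl (lift_dom j1 j2 m) (V j2)) :
  (j1 < n)%N -> (j2 < n)%N -> (m < size (diff_lifts j1 j2))%N ->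
  res h1 (t j1 - mapp phi (a : sec (cst_presheaf A) (V j1))) =
  res h2 (t j2 - mapp phi (a - lift_val j1 j2 m : sec (cst_presheaf A) (V j2))).
Proof.
move=> hj1 hj2 hm.
have := diff_lifts_spec (u := nth dlift (diff_lifts j1 j2) m) (lift_dom_sub hj1 hj2 hm)
  hj1 hj2 (nth_In dlift hm).
rewrite !res_sub -!mapp_nat /= mapp_sub !resK => ->.
rewrite (res_irr _ h1) (res_irr _ h2).
by rewrite opprB addrA [res h2 _ + _]addrC subrK.
Qed.

Lemma cech_glue : exists g : sec S Defs.setX, exists2 s, covers Defs.setX s &
  forall W (h : incl W Defs.setX), List.In W s ->
  exists j (hj : incl W (V j)) (a : A),
    (j < n)%N /\ res h g = res hj (t j) - mapp phi (a : sec (cst_presheaf A) W).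
Proof.
have [thr hthr] := deep_threshold_exists.
have [jf hjf] := choice (block_in_cover hthr).
have [mf hmf] := choice (overlap_in_lift_dom hthr hjf).
pose alpha k := lift_val (jf k) (jf k.+1) (mf k).
(* t (jf k) - t (jf k.+1) = alpha k on the k-th overlap, so the corrections
   h k.+1 = h k - alpha k make consecutive corrected sections agree there *)
pose h k : A := - \sum_(i < k) alpha i.
pose kind k := (jf k, h k).
pose cs := [seq (j, a) | j <- iota 0 n, a <- enum A].
pose tau (c : nat * A) : sec S (V c.1) :=
  t c.1 - mapp phi (c.2 : sec (cst_presheaf A) (V c.1)).
pose link k := ((jf k, jf k.+1), mf k).
pose ls := [seq (p, m) | p <- [seq (j1, j2) | j1 <- iota 0 n, j2 <- iota 0 n],
                         m <- iota 0 (size (diff_lifts p.1 p.2))].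
pose P (l : nat * nat * nat) := lift_dom l.1.1 l.1.2 l.2.
have kind_in k : kind k \in cs by apply: allpairs_f; rewrite ?mem_iota ?mem_enum ?(hjf k).1.
have block_D k : incl (block thr k) (V (kind k).1) := (hjf k).2.
have link_in k : link k \in ls.
  by apply: allpairs_f_dep; [apply: allpairs_f|]; rewrite mem_iota ?(hjf _).1 ?(hmf k).1.
have overlap_P k : incl (overlap thr k) (P (link k)) := (hmf k).2.
have P_sub k := lift_dom_sub (hjf k).1 (hjf k.+1).1 (hmf k).1.
have P_D k : incl (P (link k)) (V (kind k).1) := fun x hx => (P_sub k x hx).1.
have P_D_succ k : incl (P (link k)) (V (kind k.+1).1) := fun x hx => (P_sub k x hx).2.
have tau_link k : res (P_D k) (tau (kind k)) = res (P_D_succ k) (tau (kind k.+1)).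
  rewrite /tau /= /h big_ord_recr /= opprD.
  exact: corrected_agree (hjf k).1 (hjf k.+1).1 (hmf k).1.
have [g hg] := chain_glue kind_in block_D link_in overlap_P tau_link.
exists g, (map (piece thr kind) cs); first exact: pieces_cover.
move=> W hW hWin; have [c eW hc] := In_mapP hWin; subst W.
exists c.1, (@piece_D thr _ (fun c => V c.1) kind block_D c), c.2.
have /InP /allpairsP [[j a] [hj _ ec]] := hc.
split; first by rewrite ec; move: hj; rewrite mem_iota.
by rewrite (hg _ hW) ?res_sub -?mapp_nat //; apply/InP.
Qed.
End CechGluing.

Lemma cech_glue_locally (A : finZmodType) (S : sheaf) (phi : pmorph (cst_presheaf A) S)
    n (V : nat -> subset_of) (t : forall j, sec S (V j)) :
  covers Defs.setX (map V (iota 0 n)) ->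
  (forall j1 j2, (j1 < n)%N -> (j2 < n)%N ->
     locally_in_image phi (inter (V j1) (V j2))
       (res (@incl_interl _ _) (t j1) - res (@incl_interr _ _) (t j2))) ->
  exists g : sec S Defs.setX, exists2 s, covers Defs.setX s &
    forall W (h : incl W Defs.setX), List.In W s ->
    exists j (hj : incl W (V j)) (a : A),
      (j < n)%N /\ res h g = res hj (t j) - mapp phi (a : sec (cst_presheaf A) W).
Proof.
move=> hV hdiff.
have hK (jj : nat * nat) : exists K : seq {W : subset_of & sec (cst_presheaf A) W},
    (jj.1 < n)%N -> (jj.2 < n)%N ->
    covers (inter (V jj.1) (V jj.2)) (map (@projT1 _ _) K) /\
    forall u (h : incl (projT1 u) (inter (V jj.1) (V jj.2))), List.In u K ->
      mapp phi (projT2 u) =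
      res h (res (@incl_interl _ _) (t jj.1) - res (@incl_interr _ _) (t jj.2)).
  case: (boolP (jj.1 < n)%N) => h1; last by exists [::].
  case: (boolP (jj.2 < n)%N) => h2; last by exists [::].
  by have [K hK1 hK2] := locally_in_image_lift (hdiff _ _ h1 h2); exists K.
have [Kf hKf] := choice hK.
apply: (@cech_glue A S phi n V t (fun j1 j2 => Kf (j1, j2)) hV).
  by move=> j1 j2 h1 h2; have [] := hKf (j1, j2) h1 h2.
by move=> j1 j2 u h h1 h2; have [_] := hKf (j1, j2) h1 h2; apply.
Qed.

Theorem mainTheorem5 (A : finZmodType) (AX : sheaf)
  (eta : pmorph (cst_presheaf A) AX) :
  is_sheafification eta -> H1ct_vanishes AX.
Proof.
move=> hsh I Q i p _ _ hex hepi q.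
have pi0 U (x : sec AX U) : mapp p (mapp i x) = 0 by apply/hex; exists x.
have [l hl_cover hl] := locally_in_image_lift (epi_locally_surjective hepi q).
pose dl := existT (fun W => sec I W) Defs.setX 0.
pose V j := projT1 (nth dl l j); pose t j : sec I (V j) := projT2 (nth dl l j).
have hV : covers Defs.setX (map V (iota 0 (size l))).
  by rewrite (_ : map V _ = map (@projT1 _ _) l) // -[in RHS](mkseq_nth dl l) -map_comp.
have lift_t j (h : incl (V j) Defs.setX) : (j < size l)%N -> mapp p (t j) = res h q.
  by move=> hj; apply: hl; apply: nth_In.
have hdiff j1 j2 : (j1 < size l)%N -> (j2 < size l)%N ->
    locally_in_image (pmorph_comp eta i) (inter (V j1) (V j2))
      (res (@incl_interl _ _) (t j1) - res (@incl_interr _ _) (t j2)).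
  move=> h1 h2; set d := _ - _; have [c <-] : exists c, mapp i c = d.
    apply/hex; rewrite mapp_sub !mapp_nat.
    rewrite (lift_t j1 (fun _ _ => Logic.I)) // (lift_t j2 (fun _ _ => Logic.I)) //.
    by rewrite !resK (res_irr _ (fun _ _ => Logic.I)) subrr.
  exact/locally_in_image_comp/epi_locally_surjective/sheafification_epic.
have [g [s hs hg]] := cech_glue_locally hV hdiff.
exists g; apply: (sheaf_sep hs) => W h hW.
have [j [hj [a [hjl eg]]]] := hg W h hW.
rewrite -mapp_nat eg mapp_sub /= pi0 subr0 mapp_nat (lift_t j (fun _ _ => Logic.I)) //.
by rewrite resK; apply: res_irr.
Qed.
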